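(* Let $\mathcal O$ be a regular family of $\sigma$-trees, let $\mathbf A$ be a $\sigma$-tree and $\phi:\mathbf A\to\mathbf D(\mathcal O)$ a homomorphism. Then for every $a\in V(\mathbf A)$, $(\mathbf A,a)\in\phi(a)$.
   Context: A type $\sigma$ is a finite set of relation symbols with arities; a $\sigma$-structure $\mathbf A$ is a finite set $V(\mathbf A)$ with an $r$-ary relation $R(\mathbf A)$ for each $R$ of arity $r$; homomorphisms are relation-preserving maps. $\mathrm{Inc}(\mathbf A)$ is the bipartite multigraph with parts $V(\mathbf A)$ and the blocks $(R,(x_1,\dots,x_r))$, $(x_1,\dots,x_r)\in R(\mathbf A)$, with one edge joining $x_i$ to the block for each $i$. $\mathbf A$ is a $\sigma$-forest if $\mathrm{Inc}(\mathbf A)$ has no cycles or parallel edges, a $\sigma$-tree if moreover connected. $\mathbb F,\mathbb T$: isomorphism classes of $\sigma$-forests/trees; $\mathbb F_{\mathrm r},\mathbb T_{\mathrm r}$: rooted ones $(\mathbf A,a)$. $(\mathbf A,a)+(\mathbf B,b)$: disjoint union with $a,b$ identified as new root; $[(\mathbf A,a)]$ forgets the root; $\mathbf T_0$ is the one-vertex rooted tree with empty relations. For $\mathcal O\subseteq\mathbb F$, $\mathcal O-(\mathbf A,a)=\{(\mathbf B,b)\in\mathbb F_{\mathrm r}:[(\mathbf A,a)+(\mathbf B,b)]\in\mathcal O\}$; $\mathcal O$ is regular if there are finitely many distinct such sets. Concatenation: $\mathbf C(R,(\mathbf A_1,x_1),\dots,(\mathbf A_r,x_r))$ is the disjoint union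 of the $\mathbf A_i$ with $(x_1,\dots,x_r)$ added to $R$. $\mathbf D(\mathcal O)$ has as vertices the sets $\mathcal V\subseteq\mathbb T_{\mathrm r}$ with (i) $\mathbf T_0\in\mathcal V$; (ii) $(\mathbf A,a)\in\mathcal V$ implies $\mathbf A\notin\mathcal O$; (iii) $\mathcal V=\mathbb T_{\mathrm r}\setminus\bigcup_{(\mathbf A,a)\in\mathcal H}(\mathcal O-(\mathbf A,a))$ for some family $\mathcal H$ of rooted trees. For $R$ of arity $r$, $(\mathcal V_1,\dots,\mathcal V_r)\in R(\mathbf D(\mathcal O))$ iff for all $(\mathbf A_i,a_i)\in\mathcal V_i$, with $\mathbf T=\mathbf C(R,(\mathbf A_1,a_1),\dots,(\mathbf A_r,a_r))$, $(\mathbf T,a_j)\in\mathcal V_j$ for all $j$. *)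

From HB Require Import structures.
From mathcomp Require Import all_boot.
Set Implicit Arguments. Unset Strict Implicit. Unset Printing Implicit Defensive.

Section Sigma.
Variables (sym : finType) (ar : sym -> nat).

Record str := Str { V :> finType; rels : forall R : sym, {set (ar R).-tuple V} }.

Record rstr := RStr { rs :> str; rt : V rs }.

Definition iso (A B : str) : Prop :=
  exists f : V A -> V B, bijective f /\
    forall (R : sym) (t : (ar R).-tuple (V A)),
      (t \in rels A R) = (map_tuple f t \in rels B R).

Definition iso_invariant (P : str -> Prop) : Prop :=
  forall A B, iso A B -> P A -> P B.

(* The incidence multigraph Inc(A): nodes are vertices (inl) and blocks (inr);
   a block (R, t) is a node of Inc(A) iff t \in R(A). *)
Definition block (A : str) := {R : sym & (ar R).-tuple (V A)}.
Definition node (A : str) := (V A + block A)%type.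

Definition is_node (A : str) (u : node A) : bool :=
  match u with inl _ => true | inr b => tagged b \in rels A (tag b) end.

(* adjacency in Inc(A) (the underlying simple graph; multiplicities are
   handled by [no_parallel]) *)
Definition inc_adj (A : str) : rel (node A) := fun u v =>
  match u, v with
  | inl x, inr b | inr b, inl x => (tagged b \in rels A (tag b)) && (x \in (tagged b : seq _))
  | _, _ => false
  end.

(* No parallel edges: x_i = x_j with i <> j in a tuple of a relation would give
   two edges between x_i and the block. *)
Definition no_parallel (A : str) : Prop :=
  forall (R : sym) (t : (ar R).-tuple (V A)), t \in rels A R -> uniq t.

Definition no_cycle (A : str) : Prop :=
  ~ exists p : seq (node A), [/\ 3 <= size p, uniq p & cycle (@inc_adj A) p].

Definition forest (A : str) : Prop := no_parallel A /\ no_cycle A.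

Definition connected_inc (A : str) : Prop :=
  forall u v : node A, is_node u -> is_node v -> connect (@inc_adj A) u v.

Definition tree (A : str) : Prop := forest A /\ connected_inc A.

(* (A,a) + (B,b): disjoint union of A and B with a and b identified
   (as the new root). *)
Definition plus_carrier (Aa Bb : rstr) : finType :=
  (V Aa + {y : V Bb | y != rt Bb})%type.

Definition plus_inl (Aa Bb : rstr) (x : V Aa) : plus_carrier Aa Bb := inl x.
Definition plus_inr (Aa Bb : rstr) (y : V Bb) : plus_carrier Aa Bb :=
  match insub y with Some y' => inr y' | None => inl (rt Aa) end.

Definition plus_str (Aa Bb : rstr) : str :=
  @Str (plus_carrier Aa Bb) (fun R =>
    [set map_tuple (@plus_inl Aa Bb) t | t in rels Aa R] :|:
    [set map_tuple (@plus_inr Aa Bb) t | t in rels Bb R]).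

Definition plus (Aa Bb : rstr) : rstr := @RStr (plus_str Aa Bb) (plus_inl Bb (rt Aa)).

Definition minus (O : str -> Prop) (Aa : rstr) : rstr -> Prop :=
  fun Bb => forest Bb /\ O (plus Aa Bb).

Definition regular (O : str -> Prop) : Prop :=
  exists (n : nat) (F : 'I_n -> rstr -> Prop),
    forall Aa : rstr, forest Aa ->
      exists i : 'I_n, forall Bb : rstr, minus O Aa Bb <-> F i Bb.

Definition T0_str : str := @Str unit (fun R => set0).
Definition T0 : rstr := @RStr T0_str tt.

Definition concat_carrier (R : sym) (Aa : 'I_(ar R) -> rstr) : finType :=
  {i : 'I_(ar R) & V (Aa i)}.

Definition concat_str (R : sym) (Aa : 'I_(ar R) -> rstr) : str :=
  @Str (concat_carrier Aa) (fun S =>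
    (\bigcup_(i : 'I_(ar R))
        [set map_tuple (fun x : V (Aa i) => Tagged (fun j => V (Aa j)) x) t
        | t in rels (Aa i) S]) :|:
    [set t : (ar S).-tuple (concat_carrier Aa) |
       (S == R) &&
       (val t == [seq Tagged (fun j => V (Aa j)) (rt (Aa i)) | i <- enum 'I_(ar R)])]).

Definition concat_rooted (R : sym) (Aa : 'I_(ar R) -> rstr) (j : 'I_(ar R)) : rstr :=
  @RStr (concat_str Aa) (Tagged (fun i => V (Aa i)) (rt (Aa j))).

Definition is_DVert (O : str -> Prop) (Vs : rstr -> Prop) : Prop :=
  [/\ Vs T0,
      forall Aa, Vs Aa -> ~ O Aa &
      exists H : rstr -> Prop, (forall h, H h -> tree h) /\
        forall T : rstr, Vs T <-> (tree T /\ forall h, H h -> ~ minus O h T)].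

Definition DVert (O : str -> Prop) := {Vs : rstr -> Prop | is_DVert O Vs}.

(* An (ar R)-tuple (V_1, ..., V_r) of vertices of D(O), given as a function
   on indices (tuples of DVert would hit a universe constraint). *)
Definition DRel (O : str -> Prop) (R : sym) (vs : 'I_(ar R) -> DVert O) : Prop :=
  forall Aa : 'I_(ar R) -> rstr,
    (forall i, proj1_sig (vs i) (Aa i)) ->
    forall j, proj1_sig (vs j) (concat_rooted Aa j).

Definition is_hom_D (O : str -> Prop) (A : str) (phi : V A -> DVert O) : Prop :=
  forall (R : sym) (t : (ar R).-tuple (V A)), t \in rels A R -> DRel (fun i => phi (tnth t i)).

End Sigma.

From mathcomp Require Import all_boot.
Set Implicit Arguments. Unset Strict Implicit. Unset Printing Implicit Defensive.

(* Induction on the number of blocks of A. If a lies in no block, the tree A is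
   the single vertex a, so (A, a) is isomorphic to T0, which lies in phi(a).
   Otherwise a = t_j for some block (R, t) of A. Deleting that block splits A
   into branches (A_i, t_i), each a tree with fewer blocks, so by induction
   (A_i, t_i) lies in phi(t_i). As phi maps t into R(D(O)), the concatenation
   C(R, (A_1, t_1), ..., (A_r, t_r)) rooted at t_j lies in phi(t_j), and it is
   isomorphic to (A, a). Finally, vertices of D(O) are closed under rooted
   isomorphism because O is closed under isomorphism. *)

Lemma map_tupleK (T U : Type) n (f : T -> U) (g : U -> T) :
  cancel f g -> cancel (@map_tuple n _ _ f) (map_tuple g).
Proof. by move=> fK u; apply: val_inj; rewrite /= -map_comp (eq_map fK) map_id. Qed.

Lemma map_tuple_inj (T U : Type) n (f : T -> U) :
  injective f -> injective (@map_tuple n _ _ f).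
Proof. by move=> f_inj u v /(congr1 val) /(inj_map f_inj) /val_inj. Qed.

Section RootedIso.
Variables (sym : finType) (ar : sym -> nat).
Implicit Types (A B : str ar) (h : rstr ar).

Definition rooted_iso A B (a : V A) (b : V B) (f : V A -> V B) :=
  [/\ bijective f, f a = b &
      forall S (u : (ar S).-tuple (V A)), (u \in rels A S) = (map_tuple f u \in rels B S)].

Lemma rooted_iso_sym A B a b f :
  @rooted_iso A B a b f -> exists g, rooted_iso b a g.
Proof.
case=> [[g fK gK] fa f_rels]; exists g; split; first by exists f.
- by rewrite -fa fK.
- by move=> S u; rewrite f_rels (map_tupleK gK).
Qed.

Lemma rels_rooted_iso A B a b f S :
  @rooted_iso A B a b f -> rels B S = map_tuple f @: rels A S.
Proof.
case=> [[g fK gK] _ f_rels]; apply/setP => u.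
rewrite -{1}(map_tupleK gK u) -f_rels.
by rewrite -(mem_imset _ _ (can_inj (map_tupleK fK))) (map_tupleK gK).
Qed.

Lemma plus_inr_root h (Bb : rstr ar) : plus_inr h (rt Bb) = inl (rt h).
Proof. by rewrite /plus_inr insubF //= eqxx. Qed.

Lemma plus_inr_nroot h (Bb : rstr ar) (y : V Bb) (ny : y != rt Bb) :
  plus_inr h y = inr (Sub y ny).
Proof. by rewrite /plus_inr (insubT (fun z => z != rt Bb) ny). Qed.

Section PlusMap.
Variables (h : rstr ar) (A B : str ar) (a : V A) (b : V B).

Definition plus_map (f : V A -> V B) (p : plus_carrier h (RStr a)) :
    plus_carrier h (RStr b) :=
  match p with inl x => inl x | inr y => plus_inr h (Bb:=RStr b) (f (val y)) end.

Lemma plus_map_inr f : f a = b -> forall y,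
  plus_map f (plus_inr h (Bb:=RStr a) y) = plus_inr h (Bb:=RStr b) (f y).
Proof.
move=> fa y; have [->|ny] := eqVneq y a.
  by rewrite (plus_inr_root h (RStr a)) /= fa (plus_inr_root h (RStr b)).
by rewrite (plus_inr_nroot h ny).
Qed.

End PlusMap.
Arguments plus_map {h A B a b} f p.

Lemma plus_mapK h A B (a : V A) (b : V B) f g : f a = b -> cancel f g ->
  cancel (@plus_map h _ _ a b f) (@plus_map h _ _ b a g).
Proof.
move=> fa fK; have gb : g b = a by rewrite -fa fK.
case=> [//|y] /=; rewrite plus_map_inr // fK.
by rewrite (plus_inr_nroot h (valP y)); congr inr; apply: val_inj.
Qed.

Lemma plus_rooted_iso h A B (a : V A) (b : V B) f :
  rooted_iso a b f -> iso (plus h (RStr a)) (plus h (RStr b)).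
Proof.
move=> f_iso; have [[g fK gK] fa _] := f_iso; have gb : g b = a by rewrite -fa fK.
have pK := plus_mapK (h:=h) fa fK.
exists (@plus_map h _ _ a b f); split.
  by exists (@plus_map h _ _ b a g); [|exact: plus_mapK].
move=> S u; have pinj := can_inj (map_tupleK (n:=ar S) pK).
suff -> : rels (plus h (RStr b)) S = map_tuple (plus_map f) @: rels (plus h (RStr a)) S
  by rewrite (mem_imset _ _ pinj).
rewrite /= imsetU -!imset_comp (rels_rooted_iso S f_iso) -imset_comp.
congr (_ :|: _); apply: eq_imset => w; apply: val_inj => /=; rewrite -!map_comp;
  apply: eq_map => y //=.
by rewrite plus_map_inr.
Qed.

Lemma DVert_rooted_iso (O : str ar -> Prop) (Vs : DVert O) A B (a : V A) (b : V B) f :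
  iso_invariant O -> rooted_iso a b f -> tree B ->
  proj1_sig Vs (RStr a) -> proj1_sig Vs (RStr b).
Proof.
case: Vs => P [_ _ [H [_ PE]]] /= O_iso f_iso B_tree /PE [A_tree not_minus].
apply/PE; split=> // h Hh [_ Ob]; apply: (not_minus h Hh); split; first exact: A_tree.1.
have [g g_iso] := rooted_iso_sym f_iso.
exact: O_iso (plus_rooted_iso h g_iso) Ob.
Qed.

Lemma DRel_ext (O : str ar -> Prop) (S : sym) (vs ws : 'I_(ar S) -> DVert O) :
  vs =1 ws -> DRel vs -> DRel ws.
Proof. by move=> vw vs_rel Bb Bb_in j; rewrite -vw; apply: vs_rel => k; rewrite vw. Qed.

End RootedIso.

Section Branches.
Variables (sym : finType) (ar : sym -> nat).

Lemma inc_adj_sym (A : str ar) : symmetric (@inc_adj _ _ A).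
Proof. by move=> [x|b] [y|c]. Qed.

Definition nblocks (A : str ar) := \sum_(S : sym) #|rels A S|.

Definition block_node (A : str ar) S (u : (ar S).-tuple (V A)) : node A :=
  inr (Tagged (fun S => (ar S).-tuple (V A)) u).

Variables (A : str ar) (A_tree : tree A) (R : sym) (t : (ar R).-tuple (V A)).
Hypothesis t_rel : t \in rels A R.

Definition is_cut_block S (s : seq (V A)) := (S == R) && (s == t).
Definition is_cut (n : node A) : bool :=
  if n is inr b then is_cut_block (tag b) (tagged b) else false.
Definition cut_node : node A := block_node t.

Definition cut_adj : rel (node A) :=
  fun u v => [&& inc_adj u v, ~~ is_cut u & ~~ is_cut v].

Lemma is_cut_node : is_cut cut_node.
Proof. by rewrite /= /is_cut_block !eqxx. Qed.

Lemma cut_adj_sym : symmetric cut_adj.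
Proof.
move=> u v; rewrite /cut_adj inc_adj_sym.
by case: (is_cut u) (is_cut v) => [] []; rewrite /= ?andbF ?andbT.
Qed.

Lemma cut_uniq : uniq t.
Proof. exact: A_tree.1.1 R t t_rel. Qed.

Lemma inc_adj_cut y v : inc_adj (inl y) v -> is_cut v -> y \in t.
Proof.
by case: v => [//|[S u]] /= /andP [_ yu] /andP [_ /eqP ut]; move: yu; rewrite ut.
Qed.

Lemma path_to_cut u p : ~~ is_cut u -> path (@inc_adj _ _ A) u p -> is_cut (last u p) ->
  exists i, connect cut_adj u (inl (tnth t i)).
Proof.
elim: p u => [|v p IH] u /=; first by move=> /negbTE ->.
move=> nu /andP [uv vp] lv; case: (boolP (is_cut v)) => cv.
  case: u nu uv => [y|b] nu uv; last by case: v cv uv {vp lv}.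
  by have /tnthP [i ->] := inc_adj_cut uv cv; exists i.
have [i vi] := IH v cv vp lv; exists i; apply: connect_trans vi.
by apply: connect1; rewrite /cut_adj uv nu cv.
Qed.

Lemma cut_path_avoids u p : path cut_adj u p -> all (fun v => ~~ is_cut v) p.
Proof.
elim: p u => [|v p IH] u //= /andP [/and3P [_ _ nv] vp].
by rewrite nv (IH v).
Qed.

(* Two ends of the cut block joined outside it would close a cycle through it. *)
Lemma cut_connect_tnth i i' : connect cut_adj (inl (tnth t i)) (inl (tnth t i')) -> i = i'.
Proof.
move=> /connectP [p p_path p_last]; apply/eqP; apply/negPn/negP => ii'.
case: (shortenP p_path) p_last => q q_path q_uniq _ q_last.
have tt' : tnth t i != tnth t i'.
  by apply: contra ii' => /eqP /(tuple_uniqP _ cut_uniq) ->.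
apply: A_tree.1.2; exists (cut_node :: inl (tnth t i) :: q); split.
- by case: q q_last {q_path q_uniq} => [[E]|//]; rewrite E eqxx in tt'.
- rewrite cons_uniq q_uniq andbT inE negb_or; apply/andP; split => //.
  by apply/negP => /(allP (cut_path_avoids q_path)); rewrite is_cut_node.
- rewrite /cycle rcons_cons /= rcons_path t_rel mem_tnth -q_last /= t_rel mem_tnth.
  by rewrite (sub_path _ q_path) // => u v /and3P [].
Qed.

Variable j0 : 'I_(ar R).

(* The default [j0] is never returned (see [branch_connect]); the same [j0] is
   later the position of the root in the concatenation of the branches. *)
Definition branch (x : V A) : 'I_(ar R) :=
  odflt j0 [pick i | connect cut_adj (inl x) (inl (tnth t i))].

Lemma branch_connect x : connect cut_adj (inl x) (inl (tnth t (branch x))).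
Proof.
rewrite /branch; case: pickP => [//|none].
have /connectP [p p_path p_last] := A_tree.2 (inl x) cut_node isT t_rel.
have [i xi] : exists i, connect cut_adj (inl x) (inl (tnth t i)).
  by apply: (path_to_cut (p := p)); rewrite // -p_last is_cut_node.
by rewrite none in xi.
Qed.

Lemma branchE x i : connect cut_adj (inl x) (inl (tnth t i)) -> branch x = i.
Proof.
move=> xi; apply: cut_connect_tnth; apply: connect_trans xi.
by rewrite (sym_connect_sym cut_adj_sym); apply: branch_connect.
Qed.

Lemma branch_tnth i : branch (tnth t i) = i.
Proof. exact: branchE. Qed.

Lemma branch_block S (u : (ar S).-tuple (V A)) x y :
  u \in rels A S -> ~~ is_cut_block S u -> x \in u -> y \in u -> branch x = branch y.
Proof.
move=> u_rel u_cut xu yu; apply: branchE; apply: connect_trans (branch_connect y).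
apply: (@connect_trans _ _ (block_node u)).
  by apply: connect1; rewrite /cut_adj /= u_rel xu (negbTE u_cut).
by apply: connect1; rewrite /cut_adj /= u_rel yu (negbTE u_cut).
Qed.

Definition branch_vert i : finType := {x : V A | branch x == i}.

Definition branch_rels i S : {set (ar S).-tuple (branch_vert i)} :=
  [set u | (map_tuple val u \in rels A S) && ~~ is_cut_block S (map val u)].

Lemma in_branch_rels i S (u : (ar S).-tuple (branch_vert i)) :
  (u \in branch_rels i S) =
  (map_tuple val u \in rels A S) && ~~ is_cut_block S (map_tuple val u).
Proof. by rewrite inE. Qed.

Definition branch_str i : str ar := Str (branch_rels i).
Definition branch_root i : branch_vert i := Sub (tnth t i) (introT eqP (branch_tnth i)).
Definition branch_rooted i : rstr ar := @RStr _ _ (branch_str i) (branch_root i).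

Definition branch_node i (n : node (branch_str i)) : node A :=
  match n with
  | inl x => inl (val x)
  | inr b => block_node (map_tuple val (tagged b))
  end.

Lemma branch_node_inj i : injective (@branch_node i).
Proof.
move=> [x|[S u]] [y|[S' u']] //=; first by case=> /val_inj ->.
move=> /(congr1 (fun n : node A => if n is inr b then Some b else None)) /Some_inj E.
have eSS' := congr1 tag E; simpl in eSS'; subst S'.
by rewrite (map_tuple_inj val_inj (eq_from_Tagged E)).
Qed.

Lemma branch_node_adj i : {homo @branch_node i : u v / inc_adj u v}.
Proof.
move=> [x|[S u]] [y|[S' u']] //=; rewrite inE => /andP [/andP [-> _] xu];
  by rewrite (mem_map val_inj).
Qed.

Lemma branch_forest i : forest (branch_str i).
Proof.
split.
- move=> S u; rewrite inE => /andP [u_rel _].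
  by rewrite -(map_inj_uniq val_inj); exact: A_tree.1.1 S (map_tuple val u) u_rel.
- move=> [p [p_size p_uniq p_cycle]]; apply: A_tree.1.2.
  exists (map (@branch_node i) p); split.
  + by rewrite size_map.
  + by rewrite (map_inj_uniq (@branch_node_inj i)).
  + exact: homo_cycle (@branch_node_adj i) _ p_cycle.
Qed.

Lemma cut_adj_branch_node i (m : node (branch_str i)) v : cut_adj (branch_node m) v ->
  exists2 m', branch_node m' = v & inc_adj m m'.
Proof.
case: m => [x|[S w]]; case: v => [y|[S' u]] //=.
- rewrite /cut_adj /= => /andP [/andP [u_rel xu] u_cut].
  have u_branch z : z \in u -> branch z == i.
    by move=> zu; rewrite (branch_block u_rel u_cut zu xu) (valP x).
  have uK : map_tuple val (map_tuple (insubd x) u) = u.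
    apply: val_inj => /=; rewrite -map_comp.
    by apply: map_id_in => z /u_branch zi /=; rewrite insubdK.
  exists (block_node (A := branch_str i) (map_tuple (insubd x) u)); first by rewrite /= uK.
  rewrite /= in_branch_rels uK u_rel u_cut /=.
  apply/mapP; exists (val x) => //.
  by apply: val_inj; rewrite insubdK //; apply: valP.
- rewrite /cut_adj /= => /andP [/andP [w_rel yw] /andP [w_cut _]].
  case/mapP: yw => z zw ->; exists (inl z) => //=.
  by rewrite inE w_rel w_cut zw.
Qed.

Lemma branch_node_connect i (m m' : node (branch_str i)) :
  connect cut_adj (branch_node m) (branch_node m') ->
  connect (@inc_adj _ _ (branch_str i)) m m'.
Proof.
move=> /connectP [p]; elim: p m => [|v p IH] m /=.
  by move=> _ /branch_node_inj ->.
move=> /andP [mv vp] p_last; have [m1 m1v mm1] := cut_adj_branch_node mv.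
by apply: connect_trans (connect1 mm1) _; apply: IH; rewrite m1v.
Qed.

Lemma branch_connect_root i (m : node (branch_str i)) :
  is_node m -> connect (@inc_adj _ _ (branch_str i)) m (inl (branch_root i)).
Proof.
have vert_root (x : branch_vert i) :
    connect (@inc_adj _ _ (branch_str i)) (inl x) (inl (branch_root i)).
  apply: (@branch_node_connect i (inl x)).
  by have := branch_connect (val x); rewrite (eqP (valP x)).
case: m => [x _|[S w]]; first exact: vert_root.
rewrite /= inE => /andP [w_rel w_cut].
case Ew: (tval w) => [|z w'].
  exfalso.
  have := A_tree.2 (block_node (map_tuple val w)) (inl (tnth t i)) w_rel isT.
  case/connectP => [[|v p]] //=.
  by case: v => [y|//] /andP [/andP [_]]; rewrite Ew.
apply: connect_trans (vert_root z).
by apply: connect1; rewrite /= inE w_rel w_cut Ew mem_head.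
Qed.

Lemma branch_tree i : tree (branch_str i).
Proof.
split=> [|u v nu nv]; first exact: branch_forest.
apply: connect_trans (branch_connect_root nu) _.
by rewrite (sym_connect_sym (@inc_adj_sym _)); apply: branch_connect_root.
Qed.

Lemma nblocks_branch i : nblocks (branch_str i) < nblocks A.
Proof.
rewrite /nblocks (bigD1 R) //= [X in _ < X](bigD1 R) //= -addSn.
apply: leq_add; last first.
  apply: leq_sum => S _; rewrite -(card_imset _ (map_tuple_inj val_inj)).
  apply/subset_leq_card/subsetP => _ /imsetP [w + ->].
  by rewrite in_branch_rels => /andP [].
rewrite -(card_imset _ (map_tuple_inj val_inj)) [X in _ < X](cardsD1 t) t_rel.
apply/subset_leq_card/subsetP => _ /imsetP [w + ->].
rewrite in_branch_rels => /andP [w_rel w_cut].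
rewrite !inE w_rel andbT; apply: contra w_cut => /eqP ->.
by rewrite /is_cut_block !eqxx.
Qed.

Lemma is_hom_D_branch (O : str ar -> Prop) (phi : V A -> DVert O) i :
  is_hom_D phi -> @is_hom_D _ _ _ (branch_str i) (fun x => phi (val x)).
Proof.
move=> phi_hom S u; rewrite in_branch_rels => /andP [u_rel _].
by apply: DRel_ext (phi_hom S _ u_rel) => k; rewrite tnth_map.
Qed.

Definition glue (p : concat_carrier branch_rooted) : V A :=
  val (tagged p : branch_vert (tag p)).
Definition unglue (x : V A) : concat_carrier branch_rooted :=
  Tagged (fun i => V (branch_rooted i)) (Sub x (eqxx (branch x)) : branch_vert (branch x)).

Lemma glueK : cancel glue unglue.
Proof.
case=> i [x xi]; have ei := eqP xi; subst i.
by congr Tagged; apply: val_inj.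
Qed.

Lemma unglueK : cancel unglue glue. Proof. by []. Qed.

Lemma branch_glue p : branch (glue p) = tag p.
Proof. by case: p => i [x xi]; apply/eqP. Qed.

Lemma glue_roots :
  map glue [seq Tagged (fun i => V (branch_rooted i)) (rt (branch_rooted i))
            | i <- enum 'I_(ar R)] = t.
Proof. by rewrite -map_comp; exact: map_tnth_enum. Qed.

Lemma glue_block_branch S (u : (ar S).-tuple (concat_carrier branch_rooted)) :
  map_tuple glue u \in rels A S -> ~~ is_cut_block S (map_tuple glue u) ->
  exists i, forall p, p \in u -> tag p = i.
Proof.
case: u => [[|p0 u'] size_u] u_rel u_cut; first by exists j0.
exists (tag p0) => p pu; rewrite -!branch_glue.
by apply: (branch_block u_rel u_cut); apply: map_f; rewrite ?mem_head.
Qed.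

Lemma rels_glue S u :
  (u \in rels (concat_str branch_rooted) S) = (map_tuple glue u \in rels A S).
Proof.
have glue_inj : injective glue := can_inj glueK.
rewrite /= in_setU; apply/idP/idP.
- case/orP => [/bigcupP [i _ /imsetP [w + ->]] | ].
    rewrite in_branch_rels => /andP [w_rel _].
    suff -> : map_tuple glue (map_tuple (Tagged (fun j => V (branch_rooted j))) w) =
              map_tuple val w by [].
    by apply: val_inj; rewrite /= -map_comp.
  rewrite inE => /andP [/eqP eSR /eqP eu]; subst S.
  suff -> : map_tuple glue u = t by [].
  by apply: val_inj; rewrite /= eu glue_roots.
- move=> u_rel; have [u_cut|u_ncut] := boolP (is_cut_block S (map_tuple glue u)).
    case/andP: u_cut => /eqP eSR /eqP eu; subst S; apply/orP; right.
    rewrite inE eqxx /=; apply/eqP/(inj_map glue_inj).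
    by transitivity (tval t); [rewrite -eu | rewrite -glue_roots].
  apply/orP; left; have [i u_i] := glue_block_branch u_rel u_ncut.
  have glue_i p : p \in u -> branch (glue p) == i by move=> pu; rewrite branch_glue u_i.
  apply/bigcupP; exists i => //; apply/imsetP.
  exists (map_tuple (fun p => insubd (branch_root i) (glue p)) u).
    rewrite in_branch_rels.
    have -> : map_tuple val (map_tuple (fun p => insubd (branch_root i) (glue p)) u) =
              map_tuple glue u.
      apply: val_inj => /=; rewrite -map_comp; apply/eq_in_map => p pu /=.
      by rewrite insubdK //; apply: glue_i.
    exact/andP.
  apply: val_inj; apply: (inj_map glue_inj) => /=; rewrite -!map_comp.
  by apply/eq_in_map => p pu /=; rewrite /glue /= insubdK //; apply: glue_i.
Qed.

Lemma concat_branches_iso :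
  rooted_iso (rt (concat_rooted branch_rooted j0)) (tnth t j0) glue.
Proof. by split; [exists unglue; [exact: glueK | exact: unglueK] | | exact: rels_glue]. Qed.
End Branches.

Section HomImage.
Variables (sym : finType) (ar : sym -> nat).

Lemma T0_rooted_iso (A : str ar) (a : V A) : tree A ->
  (forall S (u : (ar S).-tuple (V A)), u \in rels A S -> a \notin u) ->
  rooted_iso (rt (T0 ar)) a (fun _ => a).
Proof.
move=> A_tree a_free.
have node_a (n : node A) : is_node n -> n = inl a.
  move=> nn; have /connectP [[|v p] //=] := A_tree.2 (inl a) n isT nn.
  case: v => [//|[S u]] /= /andP [/andP [u_rel au]].
  by rewrite (negbTE (a_free S u u_rel)) in au.
split=> //.
- exists (fun _ => tt) => [[]//|x].
  by have [] := node_a (inl x) isT.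
- move=> S u; rewrite in_set0; apply/esym/negbTE/negP => u_rel.
  by have := node_a (block_node (map_tuple (fun _ => a) u)) u_rel.
Qed.

Variables (O : str ar -> Prop) (O_iso : iso_invariant O).

Lemma mem_hom_D_rooted (A : str ar) : tree A ->
  forall phi : V A -> DVert O, is_hom_D phi -> forall a, proj1_sig (phi a) (RStr a).
Proof.
have [n] := ubnP (nblocks A); elim: n A => // n IH A /ltnSE le_n A_tree phi phi_hom a.
case: (boolP [exists S, [exists u in rels A S, a \in u]]) => [a_bound | a_free].
  have /existsP [R /existsP [t /andP [t_rel /tnthP [j0 ->]]]] := a_bound.
  apply: (DVert_rooted_iso (Vs := phi (tnth t j0)) O_iso
           (concat_branches_iso A_tree t_rel j0) A_tree).
  apply: (phi_hom R t t_rel) => i.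
  have lt_n := leq_trans (nblocks_branch t_rel j0 i) le_n.
  exact: IH _ lt_n (branch_tree A_tree t_rel j0 i) _
           (is_hom_D_branch (t := t) (j0 := j0) (i := i) phi_hom) _.
have [phi_T0 _ _] := proj2_sig (phi a).
apply: (DVert_rooted_iso (Vs := phi a) O_iso (T0_rooted_iso A_tree _) A_tree phi_T0).
move=> S u u_rel; apply: contraNN a_free => au.
by apply/existsP; exists S; apply/existsP; exists u; rewrite u_rel.
Qed.
End HomImage.

Theorem lemma4p2 (sym : finType) (ar : sym -> nat) (O : str ar -> Prop)
  (O_iso : iso_invariant O) (O_trees : forall A, O A -> tree A)
  (O_reg : regular O)
  (A : str ar) (A_tree : tree A) (phi : V A -> DVert O) (phi_hom : is_hom_D phi)
  (a : V A) : proj1_sig (phi a) (@RStr _ ar A a).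
Proof. exact: mem_hom_D_rooted O_iso A A_tree phi phi_hom a. Qed.
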